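(* For all integers $n,m\ge1$, $$\beta(n)\beta(m)=\sum_{d\mid\gcd(n,m)}\beta(nm/d^2)\,d\,\lambda(d),\qquad \beta(nm)=\sum_{d\mid\gcd(n,m)}\beta(n/d)\beta(m/d)\,d\,\mu^2(d).$$ Consequently $\beta(nm)\ge\beta(n)\beta(m)$ for all $n,m\ge1$.
   Context: $\lambda$ is the Liouville function, $\mu$ the Möbius function, and $\beta(n)=\sum_{d\mid n}d\,\lambda(n/d)$. *)

From HB Require Import structures.
From mathcomp Require Import all_boot all_order all_algebra.
Set Implicit Arguments. Unset Strict Implicit. Unset Printing Implicit Defensive.
Import Order.TTheory GRing.Theory Num.Theory.
Local Open Scope ring_scope.

Definition bigOmega (n : nat) : nat := (\sum_(p <- primes n) logn p n)%N.

Definition liouville (n : nat) : int := (-1) ^+ bigOmega n.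

Definition squarefree (n : nat) : bool := all (fun p => logn p n == 1%N) (primes n).
Definition moebius (n : nat) : int :=
  if squarefree n then (-1) ^+ size (primes n) else 0.

Definition beta (n : nat) : int :=
  \sum_(d <- divisors n) (d%:Z * liouville (n %/ d)%N).

(* Both identities are equalities F n m = G n m between functions of two
   positive integers that are "jointly multiplicative": whenever n1 * m1 is
   coprime to n2 * m2, F (n1 * n2) (m1 * m2) = F n1 m1 * F n2 m2.  Such
   functions are determined by their values on pairs (p ^ a, p ^ b) of powers
   of one prime p, so the identities reduce to computations at prime powers.

   Joint multiplicativity of both sides of each identity and the prime-power
   cases then give the two identities; the inequality follows from the second
   one, whose d = 1 term is beta(n) beta(m) and whose other terms are >= 0. *)

From HB Require Import structures.
From mathcomp Require Import all_boot all_order all_algebra.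
From mathcomp Require Import zify ring.
Import Order.TTheory GRing.Theory Num.Theory.
Set Implicit Arguments. Unset Strict Implicit.

Lemma coprime_dvd2 x y a b : coprime x y -> a %| x -> b %| y -> coprime a b.
Proof. by move=> cxy ax yb; exact: coprime_dvdl ax (coprime_dvdr yb cxy). Qed.

Lemma dvdn_coprime_split a b d : coprime a b -> d %| a * b ->
  d = gcdn d a * gcdn d b.
Proof.
move=> cab dab; apply/eqP; rewrite eqn_dvd; apply/andP; split; last first.
  rewrite Gauss_dvd ?dvdn_gcdl //.
  exact: coprime_dvd2 cab (dvdn_gcdr _ _) (dvdn_gcdr _ _).
have dab' : d %| gcdn d a * b by rewrite muln_gcdl dvdn_gcd dvdn_mulr.
have : d %| gcdn (gcdn d a * b) (gcdn d a * d).
  by rewrite dvdn_gcd dab' dvdn_mull.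
by rewrite -muln_gcdr [gcdn b d]gcdnC.
Qed.

Lemma gcdn_mul_dvd a b u v : coprime a b -> u %| a -> v %| b ->
  gcdn (u * v) a = u.
Proof.
move=> cab ua vb; rewrite gcdnC Gauss_gcdl; first exact/gcdn_idPr.
exact: coprime_dvdr vb cab.
Qed.

Lemma divisorsM_coprime a b : 0 < a -> 0 < b -> coprime a b ->
  perm_eq (divisors (a * b)) [seq d1 * d2 | d1 <- divisors a, d2 <- divisors b].
Proof.
move=> a0 b0 cab; have cba : coprime b a by rewrite coprime_sym.
apply: uniq_perm; first exact: divisors_uniq.
  apply: allpairs_uniq; try exact: divisors_uniq.
  move=> [? ?] [? ?] /allpairsP[[u1 v1] /= [u1a v1b [-> ->]]].
  move=> /allpairsP[[u2 v2] /= [u2a v2b [-> ->]]] /= E.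
  move: u1a v1b u2a v2b; rewrite -!dvdn_divisors // => u1a v1b u2a v2b.
  have eu : u1 = u2.
    by rewrite -(gcdn_mul_dvd cab u1a v1b) E (gcdn_mul_dvd cab u2a v2b).
  have ev : v1 = v2.
    rewrite -(gcdn_mul_dvd cba v1b u1a) mulnC E mulnC.
    exact: gcdn_mul_dvd cba v2b u2a.
  by rewrite eu ev.
move=> d; rewrite -dvdn_divisors ?muln_gt0 ?a0 //.
apply/idP/allpairsP => [dab | [[u v] /= [ua vb ->]]].
  exists (gcdn d a, gcdn d b); rewrite /= -!dvdn_divisors // !dvdn_gcdr.
  by split=> //; exact: dvdn_coprime_split.
by move: ua vb; rewrite -!dvdn_divisors // => ua vb; exact: dvdn_mul.
Qed.

Lemma divisors_pexp p k : prime p ->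
  perm_eq (divisors (p ^ k)) [seq p ^ i | i <- iota 0 k.+1].
Proof.
move=> pp; have pk0 : 0 < p ^ k by rewrite expn_gt0 prime_gt0.
apply: uniq_perm; first exact: divisors_uniq.
  by rewrite map_inj_uniq ?iota_uniq //; apply: expnI; exact: prime_gt1.
move=> d; rewrite -dvdn_divisors //; apply/idP/mapP.
  by case/(dvdn_pfactor _ _ pp) => i ik ->; exists i; rewrite // mem_iota ltnS.
by case=> i; rewrite mem_iota ltnS => ik ->; apply/(dvdn_pfactor _ _ pp); exists i.
Qed.

Lemma gcdnMM n1 m1 n2 m2 : coprime (n1 * m1) (n2 * m2) ->
  gcdn (n1 * n2) (m1 * m2) = gcdn n1 m1 * gcdn n2 m2.
Proof.
move=> c.
have c12 : coprime n1 n2 by apply: coprime_dvd2 c (dvdn_mulr _ _) (dvdn_mulr _ _).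
have c1 : coprime n1 m2 by apply: coprime_dvd2 c (dvdn_mulr _ _) (dvdn_mull _ _).
have c2 : coprime n2 m1.
  by rewrite coprime_sym; apply: coprime_dvd2 c (dvdn_mull _ _) (dvdn_mulr _ _).
rewrite [LHS](@dvdn_coprime_split n1 n2) ?dvdn_gcdl //.
rewrite [gcdn _ n1]gcdnC [gcdn _ n2]gcdnC !gcdnA gcdnMr gcdnMl.
by rewrite Gauss_gcdl // Gauss_gcdr.
Qed.

Lemma gcdn_pexp p a e : gcdn (p ^ a) (p ^ (a + e)) = p ^ a.
Proof. by apply/gcdn_idPl; rewrite expnD dvdn_mulr. Qed.

Lemma divn_dvd_gt0 n d : 0 < n -> d %| n -> 0 < n %/ d.
Proof. by move=> n0 dn; rewrite divn_gt0 ?(dvdn_gt0 n0 dn) // dvdn_leq. Qed.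

Lemma divnMM a b d1 d2 : d1 %| a -> d2 %| b -> (a * b) %/ (d1 * d2) = (a %/ d1) * (b %/ d2).
Proof. by move=> d1a d2b; rewrite divnMA -divn_mulAC // -muln_divA. Qed.

Lemma coprime_pair_ind (Q : nat -> nat -> Prop) : Q 1 1 ->
  (forall p a b n m, prime p -> 0 < n -> 0 < m -> coprime p (n * m) ->
     Q n m -> Q (p ^ a * n) (p ^ b * m)) ->
  forall n m, 0 < n -> 0 < m -> Q n m.
Proof.
move=> Q1 QS n m n0 m0; have [k] := ubnP (n * m).
elim: k n m n0 m0 => // k IH n m n0 m0 nmk.
have nm0 : 0 < n * m by rewrite muln_gt0 n0.
case: (ltngtP 1 (n * m)) => [nm1 | | nm1]; last first.
- by move/esym/eqP: nm1; rewrite muln_eq1 => /andP[/eqP-> /eqP->].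
- by rewrite ltnNge nm0.
set p := pdiv (n * m); have pp : prime p by exact: pdiv_prime.
rewrite -(partnC p n0) -(partnC p m0) !p_part.
apply: QS => //; try exact: part_gt0.
- rewrite -partnM //.
  by have := coprime_partC p p (n * m); rewrite part_pnat_id //; exact: pnat_id.
- apply: IH; try exact: part_gt0.
  rewrite -partnM // -ltnS; apply: leq_trans nmk; rewrite ltnS.
  by rewrite -{2}(partnC p nm0) ltn_Pmull ?part_gt0 ?p_part_gt1 ?pi_pdiv.
Qed.

Lemma bigOmega_over s n : uniq s -> {subset primes n <= s} ->
  bigOmega n = \sum_(p <- s) logn p n.
Proof.
move=> us sub; rewrite (bigID (mem (primes n))) /= [X in _ + X]big1 ?addn0.
  rewrite -big_filter /bigOmega; apply: perm_big; apply: uniq_perm.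
  - exact: primes_uniq.
  - exact: filter_uniq.
  - by move=> p; rewrite mem_filter; case: (boolP (p \in primes n)) => // /sub ->.
by move=> p /negbTE np; apply/eqP; rewrite -leqn0 leqNgt logn_gt0 np.
Qed.

Lemma bigOmegaM x y : 0 < x -> 0 < y -> bigOmega (x * y) = bigOmega x + bigOmega y.
Proof.
move=> x0 y0; have sub z : {subset primes z <= primes (x * y)} -> _ :=
  bigOmega_over (primes_uniq (x * y)).
rewrite [LHS]/bigOmega (sub x) => [|p px]; last by rewrite primesM // px.
rewrite (sub y) => [|p py]; last by rewrite primesM // py orbT.
by rewrite -big_split; apply: eq_bigr => p _; rewrite lognM.
Qed.

Lemma squarefree_over s n : 0 < n -> {subset primes n <= s} ->
  squarefree n = all (fun p => logn p n <= 1) s.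
Proof.
move=> n0 sub; apply/allP/allP => sqf p ps.
  case pn: (p \in primes n); first by rewrite (eqP (sqf p pn)).
  by move/negbT: pn; rewrite -logn_gt0 -leqNgt => /leq_trans->.
by have := sqf p (sub p ps); move: ps; rewrite -logn_gt0; lia.
Qed.

Lemma squarefreeM x y : 0 < x -> 0 < y -> coprime x y ->
  squarefree (x * y) = squarefree x && squarefree y.
Proof.
move=> x0 y0 cxy; have xy0 : 0 < x * y by rewrite muln_gt0 x0.
have subx : {subset primes x <= primes (x * y)} by move=> p px; rewrite primesM ?px.
have suby : {subset primes y <= primes (x * y)}.
  by move=> p py; rewrite primesM ?py ?orbT.
rewrite (squarefree_over xy0 (fun _ => id)).
rewrite (squarefree_over x0 subx) (squarefree_over y0 suby) -all_predI.
apply/eq_in_all => p /=; rewrite lognM //.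
case: (posnP (logn p x)) => [->|]; first by rewrite add0n.
rewrite logn_gt0 mem_primes => /and3P[pp _ px].
by rewrite (@logn_coprime p y) ?addn0 ?andbT //; exact: coprime_dvdl px cxy.
Qed.

Local Open Scope ring_scope.

Lemma sum_divisorsM (R : nmodType) (F : nat -> R) a b :
  (0 < a)%N -> (0 < b)%N -> coprime a b ->
  \sum_(d <- divisors (a * b)) F d =
  \sum_(d1 <- divisors a) \sum_(d2 <- divisors b) F (d1 * d2)%N.
Proof.
by move=> a0 b0 cab; rewrite (perm_big _ (divisorsM_coprime a0 b0 cab)) big_allpairs_dep.
Qed.

Lemma sum_divisors_pexp (R : nmodType) (F : nat -> R) p k : prime p ->
  \sum_(d <- divisors (p ^ k)) F d = \sum_(i < k.+1) F (p ^ i)%N.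
Proof.
move=> pp; rewrite (perm_big _ (divisors_pexp k pp)) big_map.
by rewrite -[iota _ _]/(index_iota 0 k.+1) big_mkord.
Qed.

Lemma liouvilleM x y : (0 < x)%N -> (0 < y)%N ->
  liouville (x * y) = liouville x * liouville y.
Proof. by move=> x0 y0; rewrite /liouville bigOmegaM // exprD. Qed.

Lemma liouville_pexp p k : prime p -> liouville (p ^ k) = (-1) ^+ k.
Proof.
move=> pp; rewrite /liouville /bigOmega; case: k => [|k]; first by rewrite big_nil.
by rewrite primesX // primes_prime // big_seq1 lognX logn_prime // eqxx muln1.
Qed.

Lemma moebius_sq n : moebius n ^+ 2 = (squarefree n)%:R.
Proof. by rewrite /moebius; case: (squarefree n); rewrite ?expr0n // sqrr_sign. Qed.

Lemma moebius_sqM x y : (0 < x)%N -> (0 < y)%N -> coprime x y ->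
  moebius (x * y) ^+ 2 = moebius x ^+ 2 * moebius y ^+ 2.
Proof.
by move=> x0 y0 cxy; rewrite !moebius_sq squarefreeM //; case: (squarefree x); rewrite ?mul1r ?mul0r.
Qed.

Lemma moebius_sq_pexp p k : prime p -> moebius (p ^ k) ^+ 2 = (k <= 1)%N%:R.
Proof.
move=> pp; rewrite moebius_sq /squarefree; case: k => [|k] //.
by rewrite primesX // primes_prime //= lognX logn_prime // eqxx muln1 andbT eqSS; case: k.
Qed.

(* beta = id * lambda is multiplicative, as a Dirichlet convolution of
   multiplicative functions. *)
Lemma betaM a b : (0 < a)%N -> (0 < b)%N -> coprime a b ->
  beta (a * b) = beta a * beta b.
Proof.
move=> a0 b0 cab; rewrite /beta sum_divisorsM // big_distrlr /=.
apply: eq_big_seq => d1; rewrite -dvdn_divisors // => d1a.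
apply: eq_big_seq => d2; rewrite -dvdn_divisors // => d2b.
by rewrite divnMM // liouvilleM ?divn_dvd_gt0 // PoszM; ring.
Qed.

Lemma beta_pexp p k : prime p ->
  beta (p ^ k) = \sum_(i < k.+1) (p%:Z) ^+ i * (-1) ^+ (k - i).
Proof.
move=> pp; rewrite /beta sum_divisors_pexp //; apply: eq_bigr => i _.
rewrite -expnB ?prime_gt0 // ?(ltn_ord i : i <= k)%N // liouville_pexp //.
by rewrite -!natz natrX.
Qed.

(* The value at 1, as the empty prime power. *)
Lemma beta1 : beta 1 = 1.
Proof. by have := beta_pexp 0 (isT : prime 2); rewrite expn0 big_ord1. Qed.

Lemma beta_pexp_closed p k : prime p ->
  (p%:Z + 1) * beta (p ^ k) = (p%:Z) ^+ k.+1 + (-1) ^+ k.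
Proof.
move=> pp; elim: k => [|k IH]; first by rewrite beta_pexp // big_ord1 /=; ring.
have rec : beta (p ^ k.+1) = (p%:Z) ^+ k.+1 - beta (p ^ k).
  rewrite !beta_pexp // big_ord_recr /= subnn expr0 mulr1 addrC.
  congr (_ + _); rewrite -sumrN; apply: eq_bigr => i _.
  by rewrite subSn ?(ltn_ord i : i <= k)%N // exprS mulN1r mulrN.
rewrite rec mulrBr IH !exprS; ring.
Qed.

(* beta(p ^ k) >= 0, since p ^ (k + 1) >= 2 dominates (-1) ^ k. *)
Lemma beta_pexp_ge0 p k : prime p -> 0 <= beta (p ^ k).
Proof.
move=> pp; have p2 : 2 <= p%:Z by have := prime_gt1 pp; lia.
have pk : 2 <= (p%:Z) ^+ k.+1.
  by rewrite exprS -[2]mulr1 ler_pM ?exprn_ege1 //; lia.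
have : 0 <= (p%:Z + 1) * beta (p ^ k).
  by rewrite beta_pexp_closed // -signr_odd; case: (odd k); rewrite ?expr0 ?expr1; lia.
by rewrite pmulr_rge0 //; lia.
Qed.

(* The three-term relation behind both identities at prime powers. *)
Lemma beta_pexp_rel p a b : prime p ->
  beta (p ^ a.+1) * beta (p ^ b.+1) + p%:Z * beta (p ^ a) * beta (p ^ b) =
  beta (p ^ (a + b).+2).
Proof.
move=> pp; set P := p%:Z; have P1 : (P + 1) ^+ 2 != 0 by rewrite expf_neq0 //; lia.
apply: (mulfI P1); transitivity
  (((P + 1) * beta (p ^ a.+1)) * ((P + 1) * beta (p ^ b.+1)) +
   P * ((P + 1) * beta (p ^ a)) * ((P + 1) * beta (p ^ b))); first by ring.
transitivity ((P + 1) * ((P + 1) * beta (p ^ (a + b).+2))); last by ring.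
by rewrite !beta_pexp_closed // !exprS !exprD; ring.
Qed.

(* beta is nonnegative, being a product of its nonnegative prime-power values. *)
Lemma beta_ge0 n : (0 < n)%N -> 0 <= beta n.
Proof.
move=> n0; apply: (@coprime_pair_ind (fun n _ => 0 <= beta n)) n 1%N n0 isT.
  by rewrite beta1.
move=> p a _ k m pp k0 _ cp /= IH.
have pa : (0 < p ^ a)%N by rewrite expn_gt0 prime_gt0.
rewrite betaM // ?mulr_ge0 ?beta_pexp_ge0 //.
by apply: coprimeXl; apply: coprime_dvd2 cp (dvdnn p) (dvdn_mulr _ _).
Qed.

Definition jointly_multiplicative (R : pzSemiRingType) (F : nat -> nat -> R) :=
  forall n1 m1 n2 m2, (0 < n1)%N -> (0 < m1)%N -> (0 < n2)%N -> (0 < m2)%N ->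
  coprime (n1 * m1) (n2 * m2) -> F (n1 * n2)%N (m1 * m2)%N = F n1 m1 * F n2 m2.

Lemma jointly_multiplicative_gcd_sum (R : pzSemiRingType) (K : nat -> nat -> nat -> R) :
  (forall n1 m1 n2 m2 d1 d2, (0 < n1)%N -> (0 < m1)%N -> (0 < n2)%N -> (0 < m2)%N ->
     coprime (n1 * m1) (n2 * m2) -> (d1 %| gcdn n1 m1)%N -> (d2 %| gcdn n2 m2)%N ->
     K (n1 * n2)%N (m1 * m2)%N (d1 * d2)%N = K n1 m1 d1 * K n2 m2 d2) ->
  jointly_multiplicative (fun n m => \sum_(d <- divisors (gcdn n m)) K n m d).
Proof.
move=> KM n1 m1 n2 m2 n10 m10 n20 m20 c /=.
have g1 : (0 < gcdn n1 m1)%N by rewrite gcdn_gt0 n10.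
have g2 : (0 < gcdn n2 m2)%N by rewrite gcdn_gt0 n20.
have cg : coprime (gcdn n1 m1) (gcdn n2 m2).
  exact: coprime_dvd2 c (dvdn_mulr _ (dvdn_gcdl _ _)) (dvdn_mulr _ (dvdn_gcdl _ _)).
rewrite gcdnMM // sum_divisorsM // big_distrlr /=.
apply: eq_big_seq => d1; rewrite -dvdn_divisors // => d1g.
apply: eq_big_seq => d2; rewrite -dvdn_divisors // => d2g.
exact: KM.
Qed.

Lemma jointly_multiplicative_eq (R : pzSemiRingType) (F G : nat -> nat -> R) :
  jointly_multiplicative F -> jointly_multiplicative G ->
  (forall n m, F n m = F m n) -> (forall n m, G n m = G m n) ->
  (forall p a e, prime p -> F (p ^ a)%N (p ^ (a + e))%N = G (p ^ a)%N (p ^ (a + e))%N) ->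
  forall n m, (0 < n)%N -> (0 < m)%N -> F n m = G n m.
Proof.
move=> FM GM Fsym Gsym FGp.
have FGpp p a b : prime p -> F (p ^ a)%N (p ^ b)%N = G (p ^ a)%N (p ^ b)%N.
  move=> pp; case: (leqP a b) => [ab | /ltnW ba]; first by rewrite -(subnKC ab) FGp.
  by rewrite Fsym Gsym -(subnKC ba) FGp.
apply: (@coprime_pair_ind (fun n m => F n m = G n m)).
  by rewrite -(expn0 2) FGpp.
move=> p a b n m pp n0 m0 cp /= FGnm.
have c : coprime (p ^ a * p ^ b) (n * m) by rewrite -expnD coprimeXl.
have p0 k : (0 < p ^ k)%N by rewrite expn_gt0 prime_gt0.
by rewrite FM // GM // FGnm FGpp.
Qed.

Definition beta_lambda_sum (n m : nat) : int :=
  \sum_(d <- divisors (gcdn n m)) (beta ((n * m) %/ (d * d))%N * d%:Z * liouville d).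

Definition beta_mu_sum (n m : nat) : int :=
  \sum_(d <- divisors (gcdn n m))
    (beta (n %/ d)%N * beta (m %/ d)%N * d%:Z * (moebius d) ^+ 2).

Lemma beta_prod_jm : jointly_multiplicative (fun n m => beta n * beta m).
Proof.
move=> n1 m1 n2 m2 n10 m10 n20 m20 c.
rewrite !betaM //; first ring.
  exact: coprime_dvd2 c (dvdn_mull _ (dvdnn m1)) (dvdn_mull _ (dvdnn m2)).
exact: coprime_dvd2 c (dvdn_mulr _ (dvdnn n1)) (dvdn_mulr _ (dvdnn n2)).
Qed.

Lemma beta_mul_jm : jointly_multiplicative (fun n m => beta (n * m)).
Proof.
move=> n1 m1 n2 m2 n10 m10 n20 m20 c.
by rewrite mulnACA betaM // muln_gt0 ?n10 ?n20.
Qed.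

Lemma beta_lambda_sum_jm : jointly_multiplicative beta_lambda_sum.
Proof.
apply: jointly_multiplicative_gcd_sum => n1 m1 n2 m2 d1 d2 n10 m10 n20 m20 c d1g d2g.
have dd1 : (d1 * d1 %| n1 * m1)%N.
  by rewrite dvdn_mul // (dvdn_trans d1g) ?dvdn_gcdl ?dvdn_gcdr.
have dd2 : (d2 * d2 %| n2 * m2)%N.
  by rewrite dvdn_mul // (dvdn_trans d2g) ?dvdn_gcdl ?dvdn_gcdr.
have d10 : (0 < d1)%N by apply: dvdn_gt0 d1g; rewrite gcdn_gt0 n10.
have d20 : (0 < d2)%N by apply: dvdn_gt0 d2g; rewrite gcdn_gt0 n20.
rewrite mulnACA [(d1 * d2 * _)%N]mulnACA divnMM // betaM ?divn_dvd_gt0 ?muln_gt0 ?n10 ?n20 //.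
  by rewrite liouvilleM // PoszM; ring.
exact: coprime_dvd2 c (dvdn_div dd1) (dvdn_div dd2).
Qed.

Lemma beta_mu_sum_jm : jointly_multiplicative beta_mu_sum.
Proof.
apply: jointly_multiplicative_gcd_sum => n1 m1 n2 m2 d1 d2 n10 m10 n20 m20 c d1g d2g.
have [d1n d1m] : (d1 %| n1)%N /\ (d1 %| m1)%N.
  by rewrite !(dvdn_trans d1g) ?dvdn_gcdl ?dvdn_gcdr.
have [d2n d2m] : (d2 %| n2)%N /\ (d2 %| m2)%N.
  by rewrite !(dvdn_trans d2g) ?dvdn_gcdl ?dvdn_gcdr.
have cn : coprime n1 n2 by apply: coprime_dvd2 c (dvdn_mulr _ _) (dvdn_mulr _ _).
have cm : coprime m1 m2 by apply: coprime_dvd2 c (dvdn_mull _ _) (dvdn_mull _ _).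
rewrite !divnMM // !betaM ?divn_dvd_gt0 ?(dvdn_gt0 n10 d1n) ?(dvdn_gt0 n20 d2n) //.
- by rewrite moebius_sqM ?(coprime_dvd2 cn d1n d2n) ?(dvdn_gt0 n10 d1n) ?(dvdn_gt0 n20 d2n) // PoszM; ring.
- exact: coprime_dvd2 cm (dvdn_div d1m) (dvdn_div d2m).
- exact: coprime_dvd2 cn (dvdn_div d1n) (dvdn_div d2n).
Qed.

(* The first identity at prime powers, written as a sum over exponents and
   proved by induction on the smaller exponent via the three-term relation. *)
Lemma beta_pexp_prod p a e : prime p ->
  beta (p ^ a) * beta (p ^ (a + e)) =
  \sum_(i < a.+1) beta (p ^ (a + (a + e) - (i + i))) * (p%:Z) ^+ i * (-1) ^+ i.
Proof.
move=> pp; elim: a e => [|a IH] e.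
  by rewrite big_ord1 /= expn0 beta1 mul1r !expr0 !mulr1 !add0n subn0.
rewrite big_ord_recl /= !expr0 !mulr1.
have -> : \sum_(i < a.+1) beta (p ^ (a.+1 + (a.+1 + e) - (bump 0 i + bump 0 i))) *
    (p%:Z) ^+ bump 0 i * (-1) ^+ bump 0 i =
    - (p%:Z) * \sum_(i < a.+1) beta (p ^ (a + (a + e) - (i + i))) * (p%:Z) ^+ i * (-1) ^+ i.
  rewrite mulr_sumr; apply: eq_bigr => i _; rewrite /bump /= !exprS.
  have -> : (a.+1 + (a.+1 + e) - (i.+1 + i.+1) = a + (a + e) - (i + i))%N by lia.
  ring.
have -> : (a.+1 + (a.+1 + e) - 0 = (a + (a + e)).+2)%N by lia.
by rewrite -IH -beta_pexp_rel // addSn; ring.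
Qed.

Lemma beta_lambda_sum_pexp p a e : prime p ->
  beta (p ^ a) * beta (p ^ (a + e)) = beta_lambda_sum (p ^ a) (p ^ (a + e)).
Proof.
move=> pp; rewrite beta_pexp_prod // /beta_lambda_sum gcdn_pexp sum_divisors_pexp //.
apply: eq_bigr => i _; rewrite liouville_pexp // -!expnD -expnB ?prime_gt0 //.
  by rewrite -!natz natrX.
by have := ltn_ord i; lia.
Qed.

(* The second identity holds on pairs of powers of a prime p: only d = 1 and
   d = p contribute, and they combine by the three-term relation. *)
Lemma beta_mu_sum_pexp p a e : prime p ->
  beta (p ^ a * p ^ (a + e)) = beta_mu_sum (p ^ a) (p ^ (a + e)).
Proof.
move=> pp; rewrite /beta_mu_sum gcdn_pexp sum_divisors_pexp // -expnD.
case: a => [|a].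
  by rewrite big_ord1 /= moebius_sq_pexp // !expn0 !divn1 beta1 mul1r !mulr1.
rewrite !big_ord_recl big1 => [|i _]; last by rewrite moebius_sq_pexp // mulr0.
rewrite /= !moebius_sq_pexp //= expn0 expn1 !divn1 !mulr1 addr0.
have pS k : (p ^ k.+1 %/ p = p ^ k)%N by rewrite expnS mulKn ?prime_gt0.
have -> : (a.+1 + (a.+1 + e) = (a + (a + e)).+2)%N by lia.
by rewrite -beta_pexp_rel // addSn !pS; ring.
Qed.

(* beta(n) beta(m) is the d = 1 term of beta_mu_sum n m, whose other terms are
   nonnegative. *)
Lemma beta_prod_le_mu_sum n m : (0 < n)%N -> (0 < m)%N ->
  beta n * beta m <= beta_mu_sum n m.
Proof.
move=> n0 m0; have g0 : (0 < gcdn n m)%N by rewrite gcdn_gt0 n0.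
rewrite /beta_mu_sum (big_rem 1%N) ?divisor1 //= !divn1.
rewrite (moebius_sq_pexp 0 (isT : prime 2)) !mulr1 lerDl big_seq.
apply: sumr_ge0 => d /mem_rem; rewrite -dvdn_divisors // => dg.
have dn : (d %| n)%N := dvdn_trans dg (dvdn_gcdl _ _).
have dm : (d %| m)%N := dvdn_trans dg (dvdn_gcdr _ _).
by rewrite mulr_ge0 ?sqr_ge0 // !mulr_ge0 ?beta_ge0 ?divn_dvd_gt0.
Qed.

Theorem mainTheorem12 :
  forall n m : nat, (0 < n)%N -> (0 < m)%N ->
    [/\ beta n * beta m =
          \sum_(d <- divisors (gcdn n m))
             (beta ((n * m) %/ (d * d))%N * d%:Z * liouville d),
        beta (n * m)%N =
          \sum_(d <- divisors (gcdn n m))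
             (beta (n %/ d)%N * beta (m %/ d)%N * d%:Z * (moebius d) ^+ 2)
      & beta n * beta m <= beta (n * m)%N].
Proof.
move=> n m n0 m0.
have lambda_id : beta n * beta m = beta_lambda_sum n m.
  apply: (jointly_multiplicative_eq beta_prod_jm beta_lambda_sum_jm) => //.
  - by move=> x y; rewrite mulrC.
  - by move=> x y; rewrite /beta_lambda_sum gcdnC mulnC.
  - exact: beta_lambda_sum_pexp.
have mu_id : beta (n * m) = beta_mu_sum n m.
  apply: (jointly_multiplicative_eq beta_mul_jm beta_mu_sum_jm) => //.
  - by move=> x y; rewrite mulnC.
  - by move=> x y; rewrite /beta_mu_sum gcdnC; apply: eq_bigr => d _; ring.
  - by move=> p a e pp; rewrite -beta_mu_sum_pexp.
split; [exact: lambda_id | exact: mu_id | rewrite mu_id].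
exact: beta_prod_le_mu_sum.
Qed.
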